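(* In the line network model (see context), assume a unique worst link: there is $m$ with $p_m=\max_i p_i<1$ and $p_i<p_m$ for $i\ne m$, and let $A:=1-p_m$. Then $\mathbb{E}R_t=A\,t-r(t)$ where the function $r$ is bounded uniformly in $t\ge0$ and $n\ge1$, and consequently $\mathbb{E}T_n=\frac{n}{A}+O(1)$ as $n\to\infty$.
   Context: Line network model. Fix integers $\ell\ge1$, $n\ge1$ and erasure probabilities $p_1,\dots,p_\ell\in[0,1)$. Let $\{z_{t,i}\}$ be independent Bernoulli variables with $\mathbb{P}(z_{t,i}=1)=1-p_i$. The rank $\rho_i(t)$ of node $N^{(i)}$ after $t$ steps satisfies $\rho_1(t)=n$, $\rho_i(0)=0$ for $i\ge2$, and $\rho_{i+1}(t)=\rho_{i+1}(t-1)+z_{t,i}\mathbf 1\{\rho_i(t-1)>\rho_{i+1}(t-1)\}$. $R_t:=\rho_{\ell+1}(t)$ and $T_n:=\min\{t:\rho_{\ell+1}(t)=n\}$. Here the bound on $r(t)$ is meant in the regime before the source packets are exhausted, i.e. with the source treated as having an unlimited supply of packets (as $n\to\infty$). *)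

From Stdlib Require Import Reals Arith List Bool.
Import ListNotations.
Open Scope R_scope.

(* A configuration of the erasure variables: z t i = true  iff  z_{t,i} = 1
   (packet on link i at step t is NOT erased), which has probability 1 - p_i. *)
Definition config := nat -> nat -> bool.

(* Source supply: [Some n] = the source holds n packets (rho_1(t) = n);
   [None] = unlimited supply (rho_1 = +infinity). *)
Definition src_gt (src : option nat) (k : nat) : bool :=
  match src with Some n => Nat.ltb k n | None => true end.

(* rho src z t i = rank of node N^(i) after t steps, for i >= 2:
   rho_{i}(t) = rho_{i}(t-1) + z_{t,i-1} 1{rho_{i-1}(t-1) > rho_{i}(t-1)},
   rho_i(0) = 0, and rho_1 is the source rank. *)
Fixpoint rho (src : option nat) (z : config) (t i : nat) : nat :=
  match t with
  | O => O
  | S t' =>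
      let prev := rho src z t' i in
      let can := if Nat.eqb i 2 then src_gt src prev
                 else Nat.ltb prev (rho src z t' (i - 1)) in
      (prev + (if z t (i - 1) && can then 1 else 0))%nat
  end.

Definition Rt (l : nat) (src : option nat) (z : config) (t : nat) : nat :=
  rho src z t (S l).

Definition upd (z : config) (s i : nat) (b : bool) : config :=
  fun s' i' => if Nat.eqb s' s && Nat.eqb i' i then b else z s' i'.

(* Expectation, under independent Bernoulli(1 - p_i) variables z_{s,i} for the
   (distinct) cells (s,i) in the list, of a random variable X depending only
   on those cells. *)
Fixpoint Exp (p : nat -> R) (cells : list (nat * nat)) (X : config -> R) : R :=
  match cells with
  | [] => X (fun _ _ => false)
  | (s, i) :: cs =>
      (1 - p i) * Exp p cs (fun z => X (upd z s i true))
      + p i * Exp p cs (fun z => X (upd z s i false))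
  end.

Definition cells (l t : nat) : list (nat * nat) :=
  flat_map (fun s => map (fun i => (s, i)) (seq 1 l)) (seq 1 t).

Definition ER_inf (l : nat) (p : nat -> R) (t : nat) : R :=
  Exp p (cells l t) (fun z => INR (Rt l None z t)).

(* P(T_n = t), where T_n = min { t : rho_{l+1}(t) = n }, source holding n packets. *)
Definition PT (l : nat) (p : nat -> R) (n t : nat) : R :=
  Exp p (cells l t)
    (fun z => if Nat.eqb (Rt l (Some n) z t) n
                 && forallb (fun s => negb (Nat.eqb (Rt l (Some n) z s) n)) (seq 0 t)
              then 1 else 0).

From Stdlib Require Import Reals Arith List Bool Lra Lia FunctionalExtensionality Classical.
Import ListNotations.
Open Scope R_scope.

(** - Upper bound: the destination never holds more packets than link [m]
      has successes, so [E R_t <= A t].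
    - Lower bound: pathwise, the deficit [successes_m - R_t] is at most
      [l - 1] plus a Lindley process, obtained by reflecting link after link
      the random walks of drifts [z_m - z_k] ([deficit_bound]).  For a small
      [theta > 0] every link [k <> m] satisfies
      [E exp (theta (z_m - z_k)) < 1] ([contracting_theta_exists]), which
      bounds the exponential moments of the Lindley process uniformly in time
      ([mgf_bounded]); hence [E R_t >= A t - C].
    - Completion time: [E T_n = sum_t P (R_t < n)], and before completion the
      finite source behaves like the unlimited one.  [R_t <= successes_m]
      gives [sum_t P (R_t < n) >= n/A].  For the upper bound, time is split
      according to the success level [L] of link [m]: each level is occupied
      for mean time [<= 1/A], and [R_t < n] at a level [L >= n + l - 1]
      forces the Lindley process above [L - n - l + 1]; the level masses of
      its exponential are bounded uniformly ([level_mass_bounded]), so these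
      levels contribute [O(1)]. *)

Definition Ind (b : bool) : R := if b then 1 else 0.

Lemma Ind_01 b : 0 <= Ind b <= 1.
Proof. destruct b; simpl; lra. Qed.

(** Finite sums [fsum n f = f 0 + ... + f (n-1)] (possibly empty, unlike
    [sum_f_R0]). *)
Fixpoint fsum (n : nat) (f : nat -> R) : R :=
  match n with O => 0 | S k => fsum k f + f k end.

Lemma fsum_ext n f g : (forall k, (k < n)%nat -> f k = g k) -> fsum n f = fsum n g.
Proof. induction n; intro H; simpl; [reflexivity|]. rewrite IHn, H; auto; lia. Qed.

Lemma fsum_le n f g : (forall k, (k < n)%nat -> f k <= g k) -> fsum n f <= fsum n g.
Proof.
  induction n; intro H; simpl; [lra|].
  pose proof (H n ltac:(lia)). pose proof (IHn ltac:(intros; apply H; lia)). lra.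
Qed.

Lemma fsum_const n c : fsum n (fun _ => c) = INR n * c.
Proof. induction n; simpl fsum; [simpl; ring|]. rewrite IHn, S_INR. ring. Qed.

Lemma fsum_nonneg n f : (forall k, (k < n)%nat -> 0 <= f k) -> 0 <= fsum n f.
Proof.
  intro H. apply Rle_trans with (fsum n (fun _ => 0)).
  - rewrite fsum_const. lra.
  - apply fsum_le; auto.
Qed.

Lemma fsum_add n f g : fsum n (fun k => f k + g k) = fsum n f + fsum n g.
Proof. induction n; simpl; [ring|]. rewrite IHn; ring. Qed.

Lemma fsum_scal n a f : fsum n (fun k => a * f k) = a * fsum n f.
Proof. induction n; simpl; [ring|]. rewrite IHn; ring. Qed.

Lemma fsum_scal_r n a f : fsum n (fun k => f k * a) = fsum n f * a.
Proof. induction n; simpl; [ring|]. rewrite IHn; ring. Qed.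

Lemma fsum_shift N g : fsum (S N) g = g O + fsum N (fun t => g (S t)).
Proof. induction N; simpl in *; [ring|]. rewrite IHN. ring. Qed.

Lemma fsum_ge_term M f k :
  (forall i, (i < M)%nat -> 0 <= f i) -> (k < M)%nat -> f k <= fsum M f.
Proof.
  induction M; intros Hf Hk; [lia|]. simpl.
  pose proof (Hf M ltac:(lia)).
  destruct (Nat.eq_dec k M) as [->|].
  - pose proof (fsum_nonneg M f ltac:(intros; apply Hf; lia)). lra.
  - pose proof (IHM ltac:(intros; apply Hf; lia) ltac:(lia)). lra.
Qed.

Lemma fsum_swap n M (F : nat -> nat -> R) :
  fsum n (fun t => fsum M (fun L => F t L)) = fsum M (fun L => fsum n (fun t => F t L)).
Proof.
  induction n; simpl.
  - rewrite fsum_const. ring.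
  - rewrite IHn, <- fsum_add. reflexivity.
Qed.

Lemma fsum_triangle n (G : nat -> nat -> R) :
  fsum n (fun t => fsum (S t) (fun u => G t u)) =
  fsum n (fun u => fsum n (fun t => if Nat.leb u t then G t u else 0)).
Proof.
  induction n; [reflexivity|].
  change (fsum (S n) (fun t => fsum (S t) (fun u => G t u)))
    with (fsum n (fun t => fsum (S t) (fun u => G t u)) + fsum (S n) (G n)).
  rewrite IHn. cbn [fsum].
  rewrite (fsum_ext n (fun u => fsum n (fun t => if Nat.leb u t then G t u else 0) +
                                 (if Nat.leb u n then G n u else 0))
                      (fun u => fsum n (fun t => if Nat.leb u t then G t u else 0) + G n u)).
  2:{ intros k Hk. rewrite (proj2 (Nat.leb_le k n)) by lia. reflexivity. }
  rewrite fsum_add, Nat.leb_refl.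
  rewrite (fsum_ext n (fun t => if Nat.leb n t then G t n else 0) (fun _ => 0)).
  2:{ intros k Hk. rewrite (proj2 (Nat.leb_gt n k)) by lia. reflexivity. }
  rewrite fsum_const. ring.
Qed.

(** * Expectations over finitely many independent Bernoulli cells *)

Lemma upd_same z s i b b' : upd (upd z s i b') s i b = upd z s i b.
Proof.
  apply functional_extensionality; intro s'; apply functional_extensionality; intro i'.
  unfold upd. destruct (Nat.eqb s' s && Nat.eqb i' i); reflexivity.
Qed.

Lemma upd_at z s i b : upd z s i b s i = b.
Proof. unfold upd. rewrite !Nat.eqb_refl. reflexivity. Qed.

Lemma upd_other z s i b s' i' : (s', i') <> (s, i) -> upd z s i b s' i' = z s' i'.
Proof.
  intro H. unfold upd.
  destruct (Nat.eqb_spec s' s), (Nat.eqb_spec i' i); subst; simpl; congruence.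
Qed.

Lemma upd_comm z s i b s' i' b' : (s, i) <> (s', i') ->
  upd (upd z s i b) s' i' b' = upd (upd z s' i' b') s i b.
Proof.
  intro H.
  apply functional_extensionality; intro x; apply functional_extensionality; intro y.
  unfold upd.
  destruct (Nat.eqb_spec x s'), (Nat.eqb_spec y i'), (Nat.eqb_spec x s), (Nat.eqb_spec y i);
    simpl; subst; congruence.
Qed.

Lemma cell_eq_dec (c c' : nat * nat) : {c = c'} + {c <> c'}.
Proof. decide equality; apply Nat.eq_dec. Qed.

Definition ignores (X : config -> R) (s i : nat) := forall z b, X (upd z s i b) = X z.

Lemma ignores_upd X s i s' i' b' :
  ignores X s i -> ignores (fun z => X (upd z s' i' b')) s i.
Proof.
  intros H z b.
  destruct (cell_eq_dec (s, i) (s', i')) as [E|E].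
  - inversion E; subst. rewrite upd_same. reflexivity.
  - rewrite upd_comm by exact E. apply H.
Qed.

Lemma Exp_ext p cs X Y : (forall z, X z = Y z) -> Exp p cs X = Exp p cs Y.
Proof. intro H. f_equal. apply functional_extensionality; exact H. Qed.

Lemma Exp_const p cs c : Exp p cs (fun _ => c) = c.
Proof. induction cs as [|[s i] cs IH]; simpl; [reflexivity|]. rewrite !IH. ring. Qed.

Lemma Exp_lin p cs a b X Y :
  Exp p cs (fun z => a * X z + b * Y z) = a * Exp p cs X + b * Exp p cs Y.
Proof.
  revert X Y; induction cs as [|[s i] cs IH]; intros X Y; simpl; [reflexivity|].
  rewrite (IH (fun z => X (upd z s i true)) (fun z => Y (upd z s i true))).
  rewrite (IH (fun z => X (upd z s i false)) (fun z => Y (upd z s i false))).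
  ring.
Qed.

Lemma Exp_add p cs X Y : Exp p cs (fun z => X z + Y z) = Exp p cs X + Exp p cs Y.
Proof.
  rewrite <- (Rmult_1_l (Exp p cs X)), <- (Rmult_1_l (Exp p cs Y)), <- Exp_lin.
  apply Exp_ext; intro; ring.
Qed.

Lemma Exp_scal p cs a X : Exp p cs (fun z => a * X z) = a * Exp p cs X.
Proof.
  replace (a * Exp p cs X) with (a * Exp p cs X + 0 * Exp p cs X) by ring.
  rewrite <- Exp_lin. apply Exp_ext; intro; ring.
Qed.

Lemma Exp_sub p cs X Y : Exp p cs (fun z => X z - Y z) = Exp p cs X - Exp p cs Y.
Proof.
  replace (Exp p cs X - Exp p cs Y) with (1 * Exp p cs X + (-1) * Exp p cs Y) by ring.
  rewrite <- Exp_lin. apply Exp_ext; intro; ring.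
Qed.

Lemma Exp_fsum p cs n (F : nat -> config -> R) :
  Exp p cs (fun z => fsum n (fun k => F k z)) = fsum n (fun k => Exp p cs (F k)).
Proof.
  induction n; simpl.
  - apply Exp_const.
  - rewrite Exp_add, IHn. reflexivity.
Qed.

Definition probs_ok (p : nat -> R) (cs : list (nat * nat)) :=
  forall s i, In (s, i) cs -> 0 <= p i <= 1.

Lemma Exp_mono p cs X Y :
  probs_ok p cs -> (forall z, X z <= Y z) -> Exp p cs X <= Exp p cs Y.
Proof.
  revert X Y; induction cs as [|[s i] cs IH]; intros X Y Hp H; simpl; [apply H|].
  assert (Hi : 0 <= p i <= 1) by (apply (Hp s i); left; reflexivity).
  assert (Hp' : probs_ok p cs) by (intros s' i' Hin; apply (Hp s' i'); right; exact Hin).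
  pose proof (IH (fun z => X (upd z s i true)) (fun z => Y (upd z s i true)) Hp' (fun z => H _)).
  pose proof (IH (fun z => X (upd z s i false)) (fun z => Y (upd z s i false)) Hp' (fun z => H _)).
  nra.
Qed.

Lemma Exp_nonneg p cs X : probs_ok p cs -> (forall z, 0 <= X z) -> 0 <= Exp p cs X.
Proof. intros Hp H. rewrite <- (Exp_const p cs 0). apply Exp_mono; auto. Qed.

Lemma Exp_ignores_cons p s i cs X : ignores X s i -> Exp p ((s,i)::cs) X = Exp p cs X.
Proof.
  intro H. simpl.
  rewrite (Exp_ext p cs (fun z => X (upd z s i true)) X) by (intro; apply H).
  rewrite (Exp_ext p cs (fun z => X (upd z s i false)) X) by (intro; apply H).
  ring.
Qed.

Lemma Exp_prod p cs X Y :
  (forall s i, In (s, i) cs -> ignores X s i \/ ignores Y s i) ->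
  Exp p cs (fun z => X z * Y z) = Exp p cs X * Exp p cs Y.
Proof.
  revert X Y; induction cs as [|[s i] cs IH]; intros X Y H; simpl; [reflexivity|].
  assert (H' : forall b s' i', In (s', i') cs ->
     ignores (fun z => X (upd z s i b)) s' i' \/ ignores (fun z => Y (upd z s i b)) s' i').
  { intros b s' i' Hin. destruct (H s' i' (or_intror Hin)) as [h|h];
    [left|right]; apply ignores_upd; exact h. }
  rewrite (IH (fun z => X (upd z s i true)) (fun z => Y (upd z s i true)) (H' true)).
  rewrite (IH (fun z => X (upd z s i false)) (fun z => Y (upd z s i false)) (H' false)).
  destruct (H s i (or_introl eq_refl)) as [h|h].
  - rewrite (Exp_ext p cs (fun z => X (upd z s i true)) X) by (intro; apply h).
    rewrite (Exp_ext p cs (fun z => X (upd z s i false)) X) by (intro; apply h).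
    ring.
  - rewrite (Exp_ext p cs (fun z => Y (upd z s i true)) Y) by (intro; apply h).
    rewrite (Exp_ext p cs (fun z => Y (upd z s i false)) Y) by (intro; apply h).
    ring.
Qed.

Lemma Exp_one p cs s i X f : In (s, i) cs -> (forall z, X z = f (z s i)) ->
  Exp p cs X = (1 - p i) * f true + p i * f false.
Proof.
  revert X; induction cs as [|[s' i'] cs IH]; intros X Hin HX; [destruct Hin|].
  destruct (cell_eq_dec (s, i) (s', i')) as [E|E].
  - inversion E; subst. simpl.
    rewrite (Exp_ext p cs _ (fun _ => f true)) by (intro; rewrite HX, upd_at; reflexivity).
    rewrite (Exp_ext p cs (fun z => X (upd z s' i' false)) (fun _ => f false))
      by (intro; rewrite HX, upd_at; reflexivity).
    rewrite !Exp_const. ring.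
  - rewrite Exp_ignores_cons.
    + apply IH; auto. destruct Hin as [E'|E']; [congruence|exact E'].
    + intros z b. rewrite !HX, upd_other by exact E. reflexivity.
Qed.

Lemma Exp_two p cs s i s' i' (f g : bool -> R) :
  In (s, i) cs -> In (s', i') cs -> (s, i) <> (s', i') ->
  Exp p cs (fun z => f (z s i) * g (z s' i')) =
  ((1 - p i) * f true + p i * f false) * ((1 - p i') * g true + p i' * g false).
Proof.
  intros H1 H2 E.
  rewrite Exp_prod.
  - rewrite (Exp_one p _ s i _ f), (Exp_one p _ s' i' _ g); auto.
  - intros a b _. destruct (cell_eq_dec (a, b) (s, i)) as [E'|E'].
    + right. inversion E'; subst. intros z c. rewrite upd_other by congruence. reflexivity.
    + left. intros z c. rewrite upd_other by congruence. reflexivity.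
Qed.

Lemma Exp_ignores_all p cs X : (forall s i, In (s, i) cs -> ignores X s i) ->
  Exp p cs X = X (fun _ _ => false).
Proof.
  revert X; induction cs as [|[s i] cs IH]; intros X H; [reflexivity|].
  rewrite Exp_ignores_cons by (apply H; left; reflexivity).
  apply IH. intros; apply H; right; auto.
Qed.

Lemma Exp_app_ignored p c1 c2 X : (forall s i, In (s, i) c2 -> ignores X s i) ->
  Exp p (c1 ++ c2) X = Exp p c1 X.
Proof.
  revert X; induction c1 as [|[s i] c1 IH]; intros X H; simpl.
  - apply Exp_ignores_all; auto.
  - rewrite !IH; [reflexivity| |]; intros s' i' Hin; apply ignores_upd; auto.
Qed.

Lemma in_cells l T s i : In (s, i) (cells l T) <-> (1 <= s <= T)%nat /\ (1 <= i <= l)%nat.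
Proof.
  unfold cells. rewrite in_flat_map. split.
  - intros [x [Hx Hy]]. apply in_map_iff in Hy. destruct Hy as [y [E Hy]].
    inversion E; subst. apply in_seq in Hx. apply in_seq in Hy. lia.
  - intros [H1 H2]. exists s. split; [apply in_seq; lia|].
    apply in_map_iff. exists i. split; [reflexivity|apply in_seq; lia].
Qed.

Lemma cells_S l T : cells l (S T) = cells l T ++ map (fun i => (S T, i)) (seq 1 l).
Proof.
  unfold cells. rewrite seq_S, flat_map_app. simpl. rewrite app_nil_r.
  replace (1 + T)%nat with (S T) by lia. reflexivity.
Qed.

Definition depends_upto {B} (t : nat) (X : config -> B) :=
  forall z z', (forall s i, (s <= t)%nat -> z s i = z' s i) -> X z = X z'.

Definition depends_at (s0 : nat) (X : config -> R) :=
  forall z z', (forall i, z s0 i = z' s0 i) -> X z = X z'.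

Lemma depends_upto_ignores t X s i : depends_upto t X -> (t < s)%nat -> ignores X s i.
Proof.
  intros H Hs z b. apply H. intros s' i' Hs'. apply upd_other. intro E; inversion E; lia.
Qed.

Lemma depends_at_ignores s0 X s i : depends_at s0 X -> s <> s0 -> ignores X s i.
Proof.
  intros H Hs z b. apply H. intro i'. apply upd_other. intro E; inversion E; lia.
Qed.

Lemma Exp_indep_next p cs t X Y : depends_upto t X -> depends_at (S t) Y ->
  Exp p cs (fun z => X z * Y z) = Exp p cs X * Exp p cs Y.
Proof.
  intros HX HY. apply Exp_prod. intros s i _.
  destruct (Nat.eq_dec s (S t)).
  - left. apply (depends_upto_ignores t); auto; lia.
  - right. apply (depends_at_ignores (S t)); auto.
Qed.

Lemma Exp_cells_extend p l T T' X : (T <= T')%nat -> depends_upto T X ->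
  Exp p (cells l T') X = Exp p (cells l T) X.
Proof.
  intros H HX. induction H; [reflexivity|].
  rewrite cells_S, Exp_app_ignored; auto.
  intros s i Hin. apply in_map_iff in Hin. destruct Hin as [x [E _]]. inversion E; subst.
  apply (depends_upto_ignores T); auto. lia.
Qed.

Fixpoint successes (z : config) (k t : nat) : nat :=
  match t with
  | O => O
  | S t' => (successes z k t' + if z (S t') k then 1 else 0)%nat
  end.

Lemma successes_S z k t :
  INR (successes z k (S t)) = INR (successes z k t) + Ind (z (S t) k).
Proof. simpl. rewrite plus_INR. destruct (z (S t) k); reflexivity. Qed.

Lemma successes_le z k t : (successes z k t <= t)%nat.
Proof. induction t; simpl; [lia|]. destruct (z (S t) k); lia. Qed.

Lemma successes_depends k t : depends_upto t (fun z => successes z k t).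
Proof.
  intros z z' E. induction t; simpl; [reflexivity|].
  rewrite IHt by (intros; apply E; lia). rewrite E by lia. reflexivity.
Qed.

Section Cells.
Variable l : nat.
Variable p : nat -> R.
Hypothesis Hp : forall i, (1 <= i <= l)%nat -> 0 <= p i < 1.

Lemma probs_ok_cells T : probs_ok p (cells l T).
Proof. intros s i Hin. apply in_cells in Hin. pose proof (Hp i (proj2 Hin)). lra. Qed.

Lemma Exp_bit T s i : (1 <= s <= T)%nat -> (1 <= i <= l)%nat ->
  Exp p (cells l T) (fun z => Ind (z s i)) = 1 - p i.
Proof.
  intros Hs Hi. rewrite (Exp_one p _ s i _ Ind); [simpl; ring|apply in_cells; auto|reflexivity].
Qed.

Lemma Exp_successes T k t : (t <= T)%nat -> (1 <= k <= l)%nat ->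
  Exp p (cells l T) (fun z => INR (successes z k t)) = INR t * (1 - p k).
Proof.
  intros Ht Hk. induction t.
  - simpl. rewrite Exp_const. ring.
  - rewrite (Exp_ext _ _ _ _ (fun z => successes_S z k t)), Exp_add, IHt by lia.
    rewrite Exp_bit by lia. rewrite S_INR. ring.
Qed.

End Cells.

Lemma rho_S src z t i : rho src z (S t) i =
  (rho src z t i + (if z (S t) (i - 1) && (if Nat.eqb i 2 then src_gt src (rho src z t i)
     else Nat.ltb (rho src z t i) (rho src z t (i - 1))) then 1 else 0))%nat.
Proof. reflexivity. Qed.

Lemma rho_depends src t i : depends_upto t (fun z => rho src z t i).
Proof.
  intros z z' E. revert i. induction t; intro i; simpl; [reflexivity|].
  rewrite !IHt by (intros; apply E; lia). rewrite E by lia. reflexivity.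
Qed.

Lemma rho_step src z t i : (rho src z t i <= rho src z (S t) i <= S (rho src z t i))%nat.
Proof. rewrite rho_S. destruct (_ && _); lia. Qed.

Lemma rho_mono src z t t' i : (t <= t')%nat -> (rho src z t i <= rho src z t' i)%nat.
Proof. induction 1; auto. pose proof (rho_step src z m i). lia. Qed.

Lemma rho2_successes z t : rho None z t 2 = successes z 1 t.
Proof. induction t; [reflexivity|]. rewrite rho_S. simpl. rewrite IHt, andb_true_r. reflexivity. Qed.

Lemma rho_le_prev z t k : (2 <= k)%nat -> (rho None z t (S k) <= rho None z t k)%nat.
Proof.
  intro Hk. induction t; [simpl; lia|].
  rewrite (rho_S None z t (S k)).
  replace (Nat.eqb (S k) 2) with false by (symmetry; apply Nat.eqb_neq; lia).
  replace (S k - 1)%nat with k by lia.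
  pose proof (rho_step None z t k).
  destruct (Nat.ltb_spec (rho None z t (S k)) (rho None z t k)), (z (S t) k); simpl; lia.
Qed.

Lemma rho_le_successes z t k : (1 <= k)%nat -> (rho None z t (S k) <= successes z k t)%nat.
Proof.
  intro Hk. induction t; [simpl; lia|]. rewrite rho_S. simpl successes.
  replace (S k - 1)%nat with k by lia.
  destruct (z (S t) k); simpl andb; [|simpl; lia].
  match goal with |- context [if ?b then 1%nat else 0%nat] => destruct b end; lia.
Qed.

Lemma R_le_successes z t l m : (1 <= m <= l)%nat ->
  (rho None z t (S l) <= successes z m t)%nat.
Proof.
  intro H. assert (Hchain : forall j, (rho None z t (S m + j) <= rho None z t (S m))%nat).
  { induction j; [rewrite Nat.add_0_r; lia|].
    replace (S m + S j)%nat with (S (S m + j)) by lia.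
    pose proof (rho_le_prev z t (S m + j) ltac:(lia)). lia. }
  pose proof (rho_le_successes z t m ltac:(lia)).
  specialize (Hchain (l - m)%nat). replace (S m + (l - m))%nat with (S l) in Hchain by lia. lia.
Qed.

Lemma rho_finite_source z n t i : (2 <= i)%nat ->
  rho (Some n) z t i = Nat.min (rho None z t i) n.
Proof.
  intro Hi. revert t. induction i as [|i IHi]; intro t; [lia|].
  destruct (Nat.eq_dec i 1) as [->|Hi1].
  - clear IHi. induction t; [simpl; lia|].
    rewrite !rho_S. simpl Nat.eqb. simpl src_gt. rewrite IHt.
    destruct (Nat.ltb_spec (rho None z t 2) n).
    + rewrite Nat.min_l by lia. rewrite (proj2 (Nat.ltb_lt _ _) H).
      destruct (z (S t) (2-1)%nat); simpl; lia.
    + rewrite Nat.min_r by lia. rewrite (proj2 (Nat.ltb_ge _ _) (Nat.le_refl n)).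
      destruct (z (S t) (2-1)%nat); simpl; lia.
  - specialize (IHi ltac:(lia)). induction t; [simpl; lia|].
    rewrite !rho_S. replace (Nat.eqb (S i) 2) with false by (symmetry; apply Nat.eqb_neq; lia).
    replace (S i - 1)%nat with i by lia. rewrite IHt, IHi.
    pose proof (rho_le_prev z t i ltac:(lia)).
    destruct (Nat.ltb_spec (rho None z t (S i)) (rho None z t i)),
             (Nat.ltb_spec (Nat.min (rho None z t (S i)) n) (Nat.min (rho None z t i) n)),
             (z (S t) i); simpl; lia.
Qed.

(** * Lindley processes dominating the deficit of the destination *)

Definition drift (m : nat) (z : config) (s k : nat) : R := Ind (z s m) - Ind (z s k).

Fixpoint lindley_step (m k : nat) (prev : nat -> R) (z : config) (t : nat) : R :=
  match t with
  | O => prev O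
  | S t' => Rmax (lindley_step m k prev z t' + drift m z (S t') k) (prev (S t'))
  end.

(** [lindley m j]: the process attached to links [1..j+1]; by
    [deficit_bound] it dominates [successes_m - rho_(j+2)] up to [j]. *)
Fixpoint lindley (m j : nat) (z : config) : nat -> R :=
  match j with
  | O => fun t => INR (successes z m t) - INR (successes z 1 t)
  | S j' => lindley_step m (S (S j')) (lindley m j' z) z
  end.

Lemma lindley_0 m j z : lindley m j z 0 = 0.
Proof. induction j; simpl; [lra|]. exact IHj. Qed.

Lemma lindley_S m j z t : lindley m (S j) z (S t) =
  Rmax (lindley m (S j) z t + drift m z (S t) (S (S j))) (lindley m j z (S t)).
Proof. reflexivity. Qed.

Lemma lindley_0_S m z t : lindley m 0 z (S t) = lindley m 0 z t + drift m z (S t) 1.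
Proof. cbn [lindley]. rewrite !successes_S. unfold drift. ring. Qed.

Lemma lindley_depends m j t : depends_upto t (fun z => lindley m j z t).
Proof.
  revert t; induction j; intros t z z' E.
  - simpl. rewrite (successes_depends m t z z' E), (successes_depends 1 t z z' E). reflexivity.
  - induction t.
    + apply (IHj 0%nat); auto.
    + rewrite !lindley_S, IHt by (intros; apply E; lia).
      rewrite (IHj (S t) z z' E). unfold drift. rewrite !E by lia. reflexivity.
Qed.

Lemma deficit_bound m z j t :
  INR (successes z m t) - INR (rho None z t (S (S j))) <= lindley m j z t + INR j.
Proof.
  revert t; induction j; intro t.
  - rewrite rho2_successes. cbn [lindley INR]. rewrite Rplus_0_r. apply Rle_refl.
  - induction t.
    + rewrite lindley_0. cbn [successes rho]. pose proof (pos_INR (S j)). change (INR 0) with 0. lra.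
    + set (a := rho None z t (S (S (S j)))) in *. set (b := rho None z t (S (S j))) in *.
      rewrite lindley_S, successes_S.
      pose proof (Rmax_l (lindley m (S j) z t + drift m z (S t) (S (S j))) (lindley m j z (S t))).
      pose proof (Rmax_r (lindley m (S j) z t + drift m z (S t) (S (S j))) (lindley m j z (S t))).
      rewrite rho_S. replace (Nat.eqb (S (S (S j))) 2) with false by reflexivity.
      replace (S (S (S j)) - 1)%nat with (S (S j)) by lia. fold a b.
      destruct (Nat.ltb_spec a b) as [Hab|Hab].
      * (* node [j+3] can receive: it follows link [j+2] *)
        rewrite andb_true_r.
        assert (Ha : INR (a + (if z (S t) (S (S j)) then 1 else 0)) = INR a + Ind (z (S t) (S (S j)))).
        { rewrite plus_INR. destruct (z (S t) (S (S j))); reflexivity. }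
        rewrite Ha. unfold drift in *. rewrite S_INR in *. lra.
      * (* node [j+3] is level with node [j+2], which gained at most one packet *)
        rewrite andb_false_r, Nat.add_0_r.
        pose proof (IHj (S t)) as Hj. rewrite successes_S in Hj.
        pose proof (le_INR _ _ Hab).
        pose proof (le_INR _ _ (proj2 (rho_step None z t (S (S j))))) as Hstep. fold b in Hstep.
        rewrite !S_INR in *. lra.
Qed.

(** * Exponential moments of the Lindley processes *)

(** [phi k = E exp (theta drift_k)]: one-step moment generating function. *)
Definition phi (p : nat -> R) (m : nat) (th : R) (k : nat) : R :=
  if Nat.eqb k m then 1 else ((1 - p m) * exp th + p m) * ((1 - p k) * exp (- th) + p k).

Definition delta0 (t : nat) : R := if Nat.eqb t 0 then 1 else 0.

Fixpoint geom_conv (f : R) (b : nat -> R) (t : nat) : R :=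
  match t with O => b O | S t' => f * geom_conv f b t' + b (S t') end.

(** The bound on [E exp (theta lindley m j t)] obtained by iterating
    [geom_conv] along links [1..j+1]. *)
Fixpoint mgf_bound (p : nat -> R) (m : nat) (th : R) (j : nat) : nat -> R :=
  geom_conv (phi p m th (S j)) (match j with O => delta0 | S j' => mgf_bound p m th j' end).

Lemma geom_conv_nonneg f b t : 0 <= f -> (forall u, 0 <= b u) -> 0 <= geom_conv f b t.
Proof. intros Hf Hb. induction t; simpl; [apply Hb|]. pose proof (Hb (S t)). nra. Qed.

Lemma geom_conv_one b t : geom_conv 1 b t = fsum (S t) b.
Proof. induction t; simpl; [ring|]. rewrite IHt. simpl. ring. Qed.

Lemma geo_bound (s : nat -> R) f Q : 0 <= f < 1 -> 0 <= Q -> s O <= Q ->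
  (forall t, s (S t) <= f * s t + Q) -> forall t, s t <= Q / (1 - f).
Proof.
  intros Hf HQ H0 HS.
  assert (Q <= Q / (1 - f)).
  { apply Rmult_le_reg_r with (1 - f); [lra|]. unfold Rdiv. rewrite Rmult_assoc, Rinv_l by lra. nra. }
  induction t; [lra|].
  eapply Rle_trans; [apply HS|].
  apply Rle_trans with (f * (Q / (1 - f)) + Q); [nra|].
  right. field. lra.
Qed.

Lemma geom_conv_bounded f b M : 0 <= f < 1 -> 0 <= M -> (forall u, b u <= M) ->
  forall t, geom_conv f b t <= M / (1 - f).
Proof.
  intros Hf HM Hb. apply geo_bound; auto; [apply Hb|]. intro t. simpl. pose proof (Hb (S t)). lra.
Qed.

Lemma fsum_geom_conv f b N :
  fsum (S (S N)) (geom_conv f b) = f * fsum (S N) (geom_conv f b) + fsum (S (S N)) b.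
Proof.
  induction N; [simpl; ring|].
  change (fsum (S (S (S N))) (geom_conv f b)) with (fsum (S (S N)) (geom_conv f b) + geom_conv f b (S (S N))).
  rewrite IHN at 1.
  change (fsum (S (S N)) (geom_conv f b)) with (fsum (S N) (geom_conv f b) + geom_conv f b (S N)).
  change (fsum (S (S (S N))) b) with (fsum (S (S N)) b + b (S (S N))).
  change (geom_conv f b (S (S N))) with (f * geom_conv f b (S N) + b (S (S N))).
  ring.
Qed.

Lemma geom_conv_summable f b P : 0 <= f < 1 -> (forall u, 0 <= b u) ->
  (forall N, fsum (S N) b <= P) -> forall N, fsum (S N) (geom_conv f b) <= P / (1 - f).
Proof.
  intros Hf Hb HP.
  assert (HP0 : 0 <= P) by (eapply Rle_trans; [|apply (HP O)]; simpl; pose proof (Hb O); lra).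
  apply (geo_bound (fun N => fsum (S N) (geom_conv f b))); auto.
  - simpl. pose proof (HP O). simpl in H. lra.
  - intro t. rewrite fsum_geom_conv. pose proof (HP (S t)). lra.
Qed.

Lemma exp_Rmax_le th a b : exp (th * Rmax a b) <= exp (th * a) + exp (th * b).
Proof.
  unfold Rmax; destruct (Rle_dec a b); pose proof (exp_pos (th * a)); pose proof (exp_pos (th * b)); lra.
Qed.

Lemma le_exp_div th x : 0 < th -> x <= exp (th * x) / th.
Proof.
  intro Hth. apply Rmult_le_reg_r with th; [lra|].
  unfold Rdiv. rewrite Rmult_assoc, Rinv_l, Rmult_1_r by lra.
  destruct (Rle_dec 0 (th * x)).
  - destruct (Req_dec (th * x) 0) as [E|E]; [rewrite E, exp_0; lra|].
    pose proof (exp_ineq1 (th * x) ltac:(lra)). lra.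
  - pose proof (exp_pos (th * x)). lra.
Qed.

Definition mgf_input (p : nat -> R) (m : nat) (th : R) (j : nat) : nat -> R :=
  match j with O => delta0 | S j' => mgf_bound p m th j' end.

Lemma mgf_bound_eq p m th j : mgf_bound p m th j = geom_conv (phi p m th (S j)) (mgf_input p m th j).
Proof. destruct j; reflexivity. Qed.

Section Moments.
Variable l : nat.
Variable p : nat -> R.
Variable m : nat.
Hypothesis Hp : forall i, (1 <= i <= l)%nat -> 0 <= p i < 1.
Hypothesis Hm : (1 <= m <= l)%nat.
Variable th : R.
Hypothesis Hphi : forall k, (1 <= k <= l)%nat -> k <> m -> 0 <= phi p m th k < 1.

Lemma phi_m : phi p m th m = 1.
Proof. unfold phi. rewrite Nat.eqb_refl. reflexivity. Qed.

Lemma phi_range k : (1 <= k <= l)%nat -> 0 <= phi p m th k <= 1.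
Proof.
  intro Hk. destruct (Nat.eq_dec k m) as [->|E]; [rewrite phi_m; lra|].
  pose proof (Hphi k Hk E); lra.
Qed.

Lemma Exp_exp_drift T s k : (1 <= s <= T)%nat -> (1 <= k <= l)%nat ->
  Exp p (cells l T) (fun z => exp (th * drift m z s k)) = phi p m th k.
Proof.
  intros Hs Hk. destruct (Nat.eq_dec k m) as [->|E].
  - rewrite phi_m, <- (Exp_const p (cells l T) 1). apply Exp_ext. intro z.
    unfold drift. rewrite Rminus_diag, Rmult_0_r. apply exp_0.
  - rewrite (Exp_ext _ _ _ (fun z => exp (th * Ind (z s m)) * exp (- th * Ind (z s k)))).
    2:{ intro z. rewrite <- exp_plus. f_equal. unfold drift. ring. }
    rewrite (Exp_two p _ s m s k (fun b => exp (th * Ind b)) (fun b => exp (- th * Ind b)));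
      try (apply in_cells; lia); [|congruence].
    unfold phi. rewrite (proj2 (Nat.eqb_neq k m) E). simpl Ind.
    rewrite !Rmult_1_r, !Rmult_0_r, exp_0. ring.
Qed.

Lemma Exp_exp_add_drift T t k X : (S t <= T)%nat -> (1 <= k <= l)%nat -> depends_upto t X ->
  Exp p (cells l T) (fun z => exp (th * (X z + drift m z (S t) k))) =
  Exp p (cells l T) (fun z => exp (th * X z)) * phi p m th k.
Proof.
  intros Ht Hk HX.
  rewrite (Exp_ext _ _ _ (fun z => exp (th * X z) * exp (th * drift m z (S t) k))).
  2:{ intro z. rewrite <- exp_plus. f_equal. ring. }
  rewrite (Exp_indep_next p _ t).
  - rewrite Exp_exp_drift by lia. reflexivity.
  - intros z z' E. rewrite (HX z z' E). reflexivity.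
  - intros z z' E. unfold drift. rewrite !E. reflexivity.
Qed.

Lemma Exp_exp_lindley j T t : (S j <= l)%nat -> (t <= T)%nat ->
  Exp p (cells l T) (fun z => exp (th * lindley m j z t)) <= mgf_bound p m th j t.
Proof.
  revert t; induction j; intros t Hj Ht.
  - induction t.
    + rewrite (Exp_ext _ _ _ (fun _ => 1)), Exp_const; [simpl; unfold delta0; simpl; lra|].
      intro z. rewrite lindley_0, Rmult_0_r. apply exp_0.
    + rewrite (Exp_ext _ _ _ _ (fun z => f_equal (fun x => exp (th * x)) (lindley_0_S m z t))).
      rewrite (Exp_exp_add_drift T t 1 (fun z => lindley m 0 z t)) by (apply lindley_depends || lia).
      pose proof (IHt ltac:(lia)). pose proof (phi_range 1 ltac:(lia)).
      change (mgf_bound p m th 0 (S t)) with (phi p m th 1 * mgf_bound p m th 0 t + delta0 (S t)).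
      replace (delta0 (S t)) with 0 by reflexivity. nra.
  - induction t.
    + apply IHj; lia.
    + eapply Rle_trans.
      { apply Exp_mono; [apply probs_ok_cells; auto|]. intro z. rewrite lindley_S. apply exp_Rmax_le. }
      rewrite Exp_add, (Exp_exp_add_drift T t) by (apply lindley_depends || lia).
      pose proof (IHt ltac:(lia)). pose proof (IHj (S t) ltac:(lia) Ht).
      pose proof (phi_range (S (S j)) ltac:(lia)).
      change (mgf_bound p m th (S j) (S t))
        with (phi p m th (S (S j)) * mgf_bound p m th (S j) t + mgf_bound p m th j (S t)).
      nra.
Qed.

Lemma mgf_nonneg j : (j <= l)%nat ->
  (forall u, 0 <= mgf_input p m th j u) /\ ((S j <= l)%nat -> forall t, 0 <= mgf_bound p m th j t).
Proof.
  induction j; intro Hj.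
  - assert (H0 : forall u, 0 <= delta0 u) by (intro u; unfold delta0; destruct (Nat.eqb u 0); lra).
    split; auto. intros Hl t. apply geom_conv_nonneg; auto. apply phi_range; lia.
  - destruct (IHj ltac:(lia)) as [_ Hb]. split; [exact (Hb Hj)|].
    intros Hl t. rewrite mgf_bound_eq. apply geom_conv_nonneg.
    + apply phi_range; lia.
    + exact (Hb Hj).
Qed.

(** Before the worst link every factor contracts, so the bounds are summable. *)
Lemma mgf_input_summable j : (j < m)%nat ->
  exists P, forall N, fsum (S N) (mgf_input p m th j) <= P.
Proof.
  induction j; intro Hj.
  - exists 1. intro N. induction N; simpl in *; unfold delta0 in *; simpl in *; lra.
  - destruct (IHj ltac:(lia)) as [P HP].
    exists (P / (1 - phi p m th (S j))). intro N. simpl mgf_input. rewrite mgf_bound_eq.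
    apply geom_conv_summable; auto.
    + apply Hphi; lia.
    + apply mgf_nonneg; lia.
Qed.

(** One more link keeps the bound bounded in time: before or after [m] by
    contraction, at [m] because [phi m = 1] turns [geom_conv] into a partial
    sum of a summable sequence. *)
Lemma mgf_bounded_step j : (S j <= l)%nat ->
  (exists M, 0 <= M /\ forall u, mgf_input p m th j u <= M) ->
  exists M, forall t, mgf_bound p m th j t <= M.
Proof.
  intros Hj [M [HM0 HM]]. destruct (Nat.eq_dec (S j) m) as [E|E].
  - destruct (mgf_input_summable j ltac:(lia)) as [P HP].
    exists P. intro t. rewrite mgf_bound_eq, E, phi_m, geom_conv_one. apply HP.
  - exists (M / (1 - phi p m th (S j))). intro t. rewrite mgf_bound_eq.
    apply geom_conv_bounded; auto. apply Hphi; lia.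
Qed.

Lemma mgf_bounded j : (S j <= l)%nat -> exists M, forall t, mgf_bound p m th j t <= M.
Proof.
  induction j as [|j IH]; intro Hj; apply mgf_bounded_step; auto.
  - exists 1. split; [lra|]. intro u. unfold mgf_input, delta0. destruct (Nat.eqb u 0); lra.
  - destruct (IH ltac:(lia)) as [M HM]. exists M. split; [|exact HM].
    eapply Rle_trans; [apply (proj2 (mgf_nonneg j ltac:(lia))); lia|apply (HM O)].
Qed.

End Moments.

Lemma uniform_margin (f : nat -> R) (P : nat -> Prop) L :
  (forall i, (i <= L)%nat -> P i -> f i < 0) ->
  exists d, 0 < d /\ forall i, (i <= L)%nat -> P i -> f i <= - d.
Proof.
  induction L as [|L IH]; intro H.
  - destruct (classic (P 0%nat)) as [HP|HP].
    + exists (- f 0%nat). split; [pose proof (H 0%nat (le_n 0) HP); lra|].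
      intros i Hi _. replace i with 0%nat by lia. lra.
    + exists 1. split; [lra|]. intros i Hi HPi. replace i with 0%nat in HPi by lia. contradiction.
  - destruct (IH ltac:(intros; apply H; auto)) as [d [Hd Hle]].
    destruct (classic (P (S L))) as [HP|HP].
    + pose proof (H (S L) (le_n _) HP).
      exists (Rmin d (- f (S L))). split; [apply Rmin_glb_lt; lra|].
      pose proof (Rmin_l d (- f (S L))). pose proof (Rmin_r d (- f (S L))).
      intros i Hi HPi. destruct (Nat.eq_dec i (S L)) as [->|E]; [lra|].
      pose proof (Hle i ltac:(lia) HPi). lra.
    + exists d. split; auto. intros i Hi HPi.
      destruct (Nat.eq_dec i (S L)) as [->|E]; [contradiction|]. apply Hle; auto; lia.
Qed.

(** If link [k] is strictly better than link [m] by [d], the one-step moment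
    generating function of their drift at [theta = ln (1 + d/2)] is below 1. *)
Lemma two_link_contraction pk pm d x :
  0 <= pk -> pm < 1 -> 0 < d -> pk <= pm - d -> x = 1 + d / 2 ->
  0 <= ((1 - pm) * x + pm) * ((1 - pk) * / x + pk) < 1.
Proof.
  intros H1 H2 H3 H4 Hx.
  assert (Hx1 : 1 < x) by lra.
  set (a := 1 - pm). set (B := 1 - pk).
  assert (Ha : 0 < a) by (unfold a; lra).
  assert (HB : B <= 1) by (unfold B; lra).
  assert (HBa : d <= B - a) by (unfold a, B; lra).
  assert (Hpm : 0 <= pm) by lra.
  assert (Hix : 0 < / x) by (apply Rinv_0_lt_compat; lra).
  split; [apply Rmult_le_pos; nra|].
  assert (K : a * x * (1 - B) < B * (1 - a)).
  { assert (a * (1 - B) <= 1) by nra. assert (0 <= a * (1 - B)) by nra. rewrite Hx. nra. }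
  replace pm with (1 - a) by (unfold a; ring). replace pk with (1 - B) by (unfold B; ring).
  replace (1 - (1 - a)) with a by ring.
  apply Rmult_lt_reg_r with x; [lra|].
  replace ((a * x + (1 - a)) * (B * / x + (1 - B)) * x) with ((a * x + (1 - a)) * (B + (1 - B) * x))
    by (field; lra).
  nra.
Qed.

Lemma contracting_theta_exists (l : nat) (p : nat -> R) (m : nat) :
  (forall i, (1 <= i <= l)%nat -> 0 <= p i < 1) -> (1 <= m <= l)%nat ->
  (forall i, (1 <= i <= l)%nat -> i <> m -> p i < p m) ->
  exists th, 0 < th /\ (forall k, (1 <= k <= l)%nat -> k <> m -> 0 <= phi p m th k < 1).
Proof.
  intros Hp Hm Hlt.
  destruct (uniform_margin (fun i => p i - p m) (fun i => (1 <= i <= l)%nat /\ i <> m) l)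
    as [d [Hd Hdi]].
  { intros i _ [Hi E]. pose proof (Hlt i Hi E). lra. }
  exists (ln (1 + d / 2)). split.
  - rewrite <- ln_1. apply ln_increasing; lra.
  - intros k Hk Hkm. unfold phi. rewrite (proj2 (Nat.eqb_neq k m) Hkm).
    rewrite exp_Ropp, exp_ln by lra.
    pose proof (Hdi k ltac:(lia) (conj Hk Hkm)). pose proof (Hp k Hk). pose proof (Hp m Hm).
    apply (two_link_contraction (p k) (p m) d); auto; lra.
Qed.

Lemma expected_rank_upper l p m t :
  (forall i, (1 <= i <= l)%nat -> 0 <= p i < 1) -> (1 <= m <= l)%nat ->
  ER_inf l p t <= INR t * (1 - p m).
Proof.
  intros Hp Hm. unfold ER_inf, Rt.
  rewrite <- (Exp_successes l p t m t) by lia.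
  apply Exp_mono; [apply probs_ok_cells; auto|]. intro z.
  apply le_INR, R_le_successes; lia.
Qed.

(** The deficit [A t - E R_t] is at most [E lindley + (l - 1)], and
    [x <= exp (theta x) / theta] turns the exponential moment bound into a
    bound on the mean. *)
Lemma expected_rank_lower l p m th M t : (1 <= l)%nat ->
  (forall i, (1 <= i <= l)%nat -> 0 <= p i < 1) -> (1 <= m <= l)%nat -> 0 < th ->
  (forall k, (1 <= k <= l)%nat -> k <> m -> 0 <= phi p m th k < 1) ->
  (forall t, mgf_bound p m th (l - 1) t <= M) ->
  INR t * (1 - p m) - ER_inf l p t <= M / th + INR (l - 1).
Proof.
  intros Hl Hp Hm Hth Hphi HM. unfold ER_inf, Rt.
  rewrite <- (Exp_successes l p t m t), <- Exp_sub by lia.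
  apply Rle_trans with
    (Exp p (cells l t) (fun z => / th * exp (th * lindley m (l - 1) z t) + INR (l - 1) * 1)).
  { apply Exp_mono; [apply probs_ok_cells; auto|]. intro z.
    pose proof (deficit_bound m z (l - 1) t) as D. replace (S (S (l - 1))) with (S l) in D by lia.
    pose proof (le_exp_div th (lindley m (l - 1) z t) Hth) as XL.
    unfold Rdiv in XL. lra. }
  rewrite Exp_lin, Exp_const.
  pose proof (Exp_exp_lindley l p m Hp Hm th Hphi (l - 1) t t ltac:(lia) ltac:(lia)).
  pose proof (HM t). pose proof (Rinv_0_lt_compat th Hth).
  unfold Rdiv. nra.
Qed.

Theorem expected_rank_linear (l : nat) (p : nat -> R) (m : nat) :
  (1 <= l)%nat ->
  (forall i, (1 <= i <= l)%nat -> 0 <= p i < 1) ->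
  (1 <= m <= l)%nat ->
  (forall i, (1 <= i <= l)%nat -> i <> m -> p i < p m) ->
  exists C : R, forall t : nat, Rabs ((1 - p m) * INR t - ER_inf l p t) <= C.
Proof.
  intros Hl Hp Hm Hlt.
  destruct (contracting_theta_exists l p m Hp Hm Hlt) as [th [Hth Hphi]].
  destruct (mgf_bounded l p m Hm th Hphi (l - 1) ltac:(lia)) as [M HM].
  exists (M / th + INR (l - 1)). intro t.
  pose proof (expected_rank_upper l p m t Hp Hm).
  pose proof (expected_rank_lower l p m th M t Hl Hp Hm Hth Hphi HM).
  rewrite Rabs_right; lra.
Qed.

(** * Level decomposition: time spent at each success level of the worst link *)

Lemma level_exits z k N L :
  fsum N (fun t => Ind (Nat.eqb (successes z k t) L) * Ind (z (S t) k)) =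
  Ind (Nat.ltb L (successes z k N)).
Proof.
  induction N; [reflexivity|].
  simpl fsum. rewrite IHN. simpl successes. unfold Ind.
  destruct (z (S N) k), (Nat.eqb_spec (successes z k N) L), (Nat.ltb_spec L (successes z k N)),
    (Nat.ltb_spec L (successes z k N + 1)), (Nat.ltb_spec L (successes z k N + 0)); lra || lia.
Qed.

Section Levels.
Variable l : nat.
Variable p : nat -> R.
Variable m : nat.
Hypothesis Hp : forall i, (1 <= i <= l)%nat -> 0 <= p i < 1.
Hypothesis Hm : (1 <= m <= l)%nat.

Let A := 1 - p m.

Lemma A_pos : 0 < A.
Proof. unfold A. pose proof (Hp m Hm). lra. Qed.

Lemma Exp_times_success N t X : (t < N)%nat -> depends_upto t X ->
  Exp p (cells l N) (fun z => X z * Ind (z (S t) m)) = Exp p (cells l N) X * A.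
Proof.
  intros Ht HX. rewrite (Exp_indep_next p _ t); auto.
  - rewrite Exp_bit; auto; lia.
  - intros z z' E. rewrite E. reflexivity.
Qed.

(** Each visit of level [L] ends with probability [A], and level [L] is left
    at most once: [A * E (weighted time at level L) <= E (weight)]. *)
Lemma level_visits N u L X : depends_upto u X -> (forall z, 0 <= X z) ->
  A * fsum N (fun t => if Nat.leb u t
                       then Exp p (cells l N) (fun z => X z * Ind (Nat.eqb (successes z m t) L))
                       else 0)
  <= Exp p (cells l N) X.
Proof.
  intros HX Hpos. rewrite <- fsum_scal.
  rewrite (fsum_ext N _ (fun t => Exp p (cells l N) (fun z =>
      (if Nat.leb u t then X z * Ind (Nat.eqb (successes z m t) L) else 0) * Ind (z (S t) m)))).
  2:{ intros t Ht. destruct (Nat.leb_spec u t).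
      - rewrite Exp_times_success; auto; [ring|].
        intros z z' E. rewrite (HX z z') by (intros; apply E; lia).
        rewrite (successes_depends m t z z' E). reflexivity.
      - rewrite (Exp_ext _ _ _ (fun _ => 0)) by (intro; ring). rewrite Exp_const. ring. }
  rewrite <- Exp_fsum. apply Exp_mono; [apply probs_ok_cells; auto|]. intro z.
  apply Rle_trans with (X z * fsum N (fun t => Ind (Nat.eqb (successes z m t) L) * Ind (z (S t) m))).
  - rewrite <- fsum_scal. apply fsum_le. intros t _. pose proof (Hpos z).
    pose proof (Ind_01 (Nat.eqb (successes z m t) L)). pose proof (Ind_01 (z (S t) m)).
    destruct (Nat.leb u t); [right; ring|]. rewrite Rmult_0_l. apply Rmult_le_pos; nra.
  - rewrite level_exits. pose proof (Hpos z). pose proof (Ind_01 (Nat.ltb L (successes z m N))). nra.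
Qed.

Lemma level_time N u L X : depends_upto u X -> (forall z, 0 <= X z) ->
  fsum (S N) (fun t => if Nat.leb u t
                       then Exp p (cells l N) (fun z => X z * Ind (Nat.eqb (successes z m t) L))
                       else 0)
  <= Exp p (cells l N) X * (/ A + 1).
Proof.
  intros HX Hpos. pose proof A_pos as HA.
  pose proof (level_visits N u L X HX Hpos) as Hvis.
  set (S0 := fsum N _) in Hvis. simpl fsum. fold S0.
  assert (Hlast : (if Nat.leb u N then Exp p (cells l N) (fun z => X z * Ind (Nat.eqb (successes z m N) L)) else 0)
                  <= Exp p (cells l N) X).
  { destruct (Nat.leb u N).
    - apply Exp_mono; [apply probs_ok_cells; auto|]. intro z.
      pose proof (Hpos z). pose proof (Ind_01 (Nat.eqb (successes z m N) L)). nra.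
    - apply Exp_nonneg; [apply probs_ok_cells; auto|]. auto. }
  assert (S0 <= Exp p (cells l N) X * / A).
  { apply Rmult_le_reg_l with A; auto.
    replace (A * (Exp p (cells l N) X * / A)) with (Exp p (cells l N) X) by (field; lra). lra. }
  lra.
Qed.

End Levels.

(** [psi k = E exp (- theta z_k)]; for [k <> m], [phi k] factors as
    [((1 - p_m) e^theta + p_m) psi k]. *)
Definition psi (p : nat -> R) (th : R) (k : nat) : R := (1 - p k) * exp (- th) + p k.

Lemma psi_nonneg l p th k : (forall i, (1 <= i <= l)%nat -> 0 <= p i < 1) ->
  (1 <= k <= l)%nat -> 0 <= psi p th k.
Proof.
  intros Hp Hk. unfold psi. pose proof (Hp k Hk). pose proof (exp_pos (- th)).
  apply Rplus_le_le_0_compat; [apply Rmult_le_pos|]; lra.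
Qed.

Section LevelMass.
Variable l : nat.
Variable p : nat -> R.
Variable m : nat.
Hypothesis Hp : forall i, (1 <= i <= l)%nat -> 0 <= p i < 1.
Hypothesis Hm : (1 <= m <= l)%nat.
Variable th : R.
Hypothesis Hphi : forall k, (1 <= k <= l)%nat -> k <> m -> 0 <= phi p m th k < 1.

Let A := 1 - p m.

Definition level_term N j L t : R :=
  Exp p (cells l N) (fun z => Ind (Nat.eqb (successes z m t) L) * exp (th * lindley m j z t)).

Definition level_mass N j L : R := fsum (S N) (level_term N j L).

Lemma level_term_nonneg N j L t : 0 <= level_term N j L t.
Proof.
  apply Exp_nonneg; [apply probs_ok_cells; auto|]. intro z.
  pose proof (Ind_01 (Nat.eqb (successes z m t) L)). pose proof (exp_pos (th * lindley m j z t)). nra.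
Qed.

Lemma level_mass_nonneg N j L : 0 <= level_mass N j L.
Proof. apply fsum_nonneg. intros. apply level_term_nonneg. Qed.

(** If the worst link is the first, [lindley m 0 = 0] and the mass is the
    expected time at level [L]. *)
Lemma level_mass_first N L : m = 1%nat -> level_mass N 0 L <= / A + 1.
Proof.
  intro E. unfold level_mass, level_term.
  pose proof (level_time l p m Hp Hm N 0 L (fun _ => 1)) as LT. rewrite Exp_const in LT.
  eapply Rle_trans; [|rewrite <- Rmult_1_l; apply LT; [intros z z' _; reflexivity|intro; lra]].
  apply Req_le, fsum_ext. intros t _. apply Exp_ext. intro z. cbn [lindley].
  rewrite E, Rminus_diag, Rmult_0_r, exp_0. ring.
Qed.

(** At the worst link the drift vanishes, so the Lindley process is a
    running maximum and its exponential is at most a sum over the past. *)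
Lemma exp_lindley_at_worst j z t : S (S j) = m ->
  exp (th * lindley m (S j) z t) <= fsum (S t) (fun u => exp (th * lindley m j z u)).
Proof.
  intro E. induction t; [simpl; lra|].
  rewrite lindley_S. eapply Rle_trans; [apply exp_Rmax_le|].
  unfold drift. rewrite E, Rminus_diag, Rplus_0_r.
  change (fsum (S (S t)) (fun u => exp (th * lindley m j z u)))
    with (fsum (S t) (fun u => exp (th * lindley m j z u)) + exp (th * lindley m j z (S t))).
  lra.
Qed.

Lemma level_mass_at_worst j : S (S j) = m ->
  exists P, forall N L, level_mass N (S j) L <= (/ A + 1) * P.
Proof.
  intro E. destruct (mgf_input_summable l p m Hm th Hphi (S j) ltac:(lia)) as [P HP].
  exists P. intros N L. unfold level_mass, level_term.
  eapply Rle_trans.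
  { apply fsum_le. intros t _. apply Exp_mono; [apply probs_ok_cells; auto|]. intro z.
    apply Rmult_le_compat_l; [apply Ind_01|]. apply (exp_lindley_at_worst j z t E). }
  rewrite (fsum_ext (S N) _ (fun t => fsum (S t) (fun u => Exp p (cells l N)
             (fun z => exp (th * lindley m j z u) * Ind (Nat.eqb (successes z m t) L))))).
  2:{ intros t _. rewrite <- Exp_fsum. apply Exp_ext. intro z. rewrite <- fsum_scal.
      apply fsum_ext. intros; ring. }
  rewrite fsum_triangle.
  eapply Rle_trans.
  { apply fsum_le. intros u _. apply (level_time l p m Hp Hm N u L (fun z => exp (th * lindley m j z u))).
    - intros z z' EE. rewrite (lindley_depends m j u z z' EE). reflexivity.
    - intro; apply Rlt_le, exp_pos. }
  rewrite fsum_scal_r, (Rmult_comm (/ A + 1)). apply Rmult_le_compat_r.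
  - pose proof (Rinv_0_lt_compat _ (A_pos l p m Hp Hm)). fold A in H. lra.
  - eapply Rle_trans; [|apply (HP N)]. apply fsum_le. intros u Hu.
    apply (Exp_exp_lindley l p m Hp Hm th Hphi j N u); lia.
Qed.

(** One step of [lindley m (j+1)] (driven by link [k = j+2]) split according
    to whether the worst link succeeds, i.e. whether the level moves up. *)
Lemma level_pathwise j z t L :
  let k := S (S j) in
  Ind (Nat.eqb (successes z m (S t)) L) * exp (th * lindley m (S j) z (S t)) <=
  Ind (Nat.eqb (successes z m t) L) * exp (th * lindley m (S j) z t)
    * ((1 - Ind (z (S t) m)) * exp (- th * Ind (z (S t) k)))
  + Ind (Nat.eqb (S (successes z m t)) L) * exp (th * lindley m (S j) z t)
    * (Ind (z (S t) m) * exp (th * (1 - Ind (z (S t) k))))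
  + Ind (Nat.eqb (successes z m (S t)) L) * exp (th * lindley m j z (S t)).
Proof.
  intro k. rewrite lindley_S.
  pose proof (exp_Rmax_le th (lindley m (S j) z t + drift m z (S t) k) (lindley m j z (S t))) as Hmax.
  rewrite Rmult_plus_distr_l, exp_plus in Hmax.
  assert (Hsplit : Ind (Nat.eqb (successes z m (S t)) L) *
                     (exp (th * lindley m (S j) z t) * exp (th * drift m z (S t) k))
     = Ind (Nat.eqb (successes z m t) L) * exp (th * lindley m (S j) z t)
         * ((1 - Ind (z (S t) m)) * exp (- th * Ind (z (S t) k)))
     + Ind (Nat.eqb (S (successes z m t)) L) * exp (th * lindley m (S j) z t)
         * (Ind (z (S t) m) * exp (th * (1 - Ind (z (S t) k))))).
  { unfold drift. simpl successes. destruct (z (S t) m); cbn [Ind].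
    - rewrite Nat.add_1_r. ring.
    - rewrite Nat.add_0_r. replace (th * (0 - Ind (z (S t) k))) with (- th * Ind (z (S t) k)) by ring.
      ring. }
  pose proof (Ind_01 (Nat.eqb (successes z m (S t)) L)).
  pose proof (exp_pos (th * lindley m j z (S t))).
  fold k. rewrite <- Hsplit. nra.
Qed.

(** Level [L] at time [t+1] comes from level [L] (worst link erased, factor
    [p_m psi k]) or from level [L-1] (worst link succeeds, factor
    [A e^theta psi k]), or from the lower process. *)
Lemma level_term_step j N L t : (S (S j) <= l)%nat -> S (S j) <> m -> (t < N)%nat ->
  level_term N (S j) L (S t) <=
  p m * psi p th (S (S j)) * level_term N (S j) L t
  + A * exp th * psi p th (S (S j))
      * Exp p (cells l N) (fun z => Ind (Nat.eqb (S (successes z m t)) L) * exp (th * lindley m (S j) z t))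
  + level_term N j L (S t).
Proof.
  intros Hk Hkm Ht. set (k := S (S j)) in *.
  assert (Hpast : forall b : nat -> nat, depends_upto t
            (fun z => Ind (Nat.eqb (b (successes z m t)) L) * exp (th * lindley m (S j) z t))).
  { intros b z z' E. rewrite (successes_depends m t z z' E), (lindley_depends m (S j) t z z' E). reflexivity. }
  assert (Hnow : forall f g : bool -> R, depends_at (S t) (fun z => f (z (S t) m) * g (z (S t) k))).
  { intros f g z z' E. rewrite !E. reflexivity. }
  unfold level_term at 1.
  eapply Rle_trans; [apply Exp_mono; [apply probs_ok_cells; auto|]; intro z; apply (level_pathwise j z t L)|].
  rewrite !Exp_add.
  rewrite (Exp_indep_next p _ t _ (fun z => (1 - Ind (z (S t) m)) * exp (- th * Ind (z (S t) k))))
    by (apply (Hpast (fun a => a)) || apply (Hnow (fun b => 1 - Ind b) (fun b => exp (- th * Ind b)))).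
  rewrite (Exp_indep_next p _ t _ (fun z => Ind (z (S t) m) * exp (th * (1 - Ind (z (S t) k)))))
    by (apply (Hpast S) || apply (Hnow Ind (fun b => exp (th * (1 - Ind b))))).
  rewrite (Exp_two p _ (S t) m (S t) k (fun b => 1 - Ind b) (fun b => exp (- th * Ind b)));
    try (apply in_cells; lia); [|congruence].
  rewrite (Exp_two p _ (S t) m (S t) k Ind (fun b => exp (th * (1 - Ind b))));
    try (apply in_cells; lia); [|congruence].
  assert (F1 : ((1 - p m) * (1 - Ind true) + p m * (1 - Ind false)) *
                ((1 - p k) * exp (- th * Ind true) + p k * exp (- th * Ind false)) = p m * psi p th k).
  { unfold psi. cbn [Ind].
    replace (- th * 1) with (- th) by ring. replace (- th * 0) with 0 by ring. rewrite exp_0. ring. }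
  assert (F2 : ((1 - p m) * Ind true + p m * Ind false) *
                ((1 - p k) * exp (th * (1 - Ind true)) + p k * exp (th * (1 - Ind false)))
               = A * exp th * psi p th k).
  { unfold psi, A. cbn [Ind].
    replace (th * (1 - 1)) with 0 by ring. replace (th * (1 - 0)) with th by ring. rewrite exp_0.
    assert (exp th * exp (- th) = 1) by (rewrite <- exp_plus, Rplus_opp_r; apply exp_0).
    transitivity ((1 - p m) * ((1 - p k) * (exp th * exp (- th)) + p k * exp th)); [rewrite H|]; ring. }
  rewrite F1, F2. unfold level_term. right. ring.
Qed.

Lemma level_recursion j N L : (S (S j) <= l)%nat -> S (S j) <> m ->
  level_mass N (S j) L <=
    Ind (Nat.eqb 0 L) + p m * psi p th (S (S j)) * level_mass N (S j) L
    + A * exp th * psi p th (S (S j)) * (match L with O => 0 | S L' => level_mass N (S j) L' end)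
    + level_mass N j L.
Proof.
  intros Hk Hkm. set (a1 := p m * psi p th (S (S j))). set (a2 := A * exp th * psi p th (S (S j))).
  set (shifted := fun t => Exp p (cells l N)
                    (fun z => Ind (Nat.eqb (S (successes z m t)) L) * exp (th * lindley m (S j) z t))).
  assert (Hpsi : 0 <= psi p th (S (S j))) by (apply (psi_nonneg l); auto; lia).
  assert (Ha1 : 0 <= a1) by (unfold a1; pose proof (Hp m Hm); apply Rmult_le_pos; lra).
  assert (Ha2 : 0 <= a2).
  { unfold a2, A. pose proof (Hp m Hm). pose proof (exp_pos th).
    apply Rmult_le_pos; [apply Rmult_le_pos|]; lra. }
  assert (Hfirst : level_term N (S j) L 0 = Ind (Nat.eqb 0 L)).
  { unfold level_term. rewrite <- (Exp_const p (cells l N) (Ind (Nat.eqb 0 L))).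
    apply Exp_ext. intro z. rewrite lindley_0, Rmult_0_r, exp_0. simpl. ring. }
  assert (Hsteps : fsum N (fun t => level_term N (S j) L (S t)) <=
                   a1 * fsum N (level_term N (S j) L) + a2 * fsum N shifted
                   + fsum N (fun t => level_term N j L (S t))).
  { rewrite <- !fsum_scal, <- !fsum_add. apply fsum_le. intros t Ht.
    apply level_term_step; auto. }
  assert (Hcur : fsum N (level_term N (S j) L) <= level_mass N (S j) L).
  { unfold level_mass. simpl fsum at 2. pose proof (level_term_nonneg N (S j) L N). lra. }
  assert (Hlow : fsum N (fun t => level_term N j L (S t)) <= level_mass N j L).
  { unfold level_mass. rewrite fsum_shift. pose proof (level_term_nonneg N j L 0). lra. }
  assert (Hprev : fsum N shifted <= match L with O => 0 | S L' => level_mass N (S j) L' end).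
  { destruct L as [|L'].
    - right. unfold shifted. rewrite (fsum_ext N _ (fun _ => 0)); [rewrite fsum_const; ring|].
      intros t _. rewrite <- (Exp_const p (cells l N) 0). apply Exp_ext. intro z. simpl Ind. ring.
    - unfold level_mass. simpl fsum at 2. pose proof (level_term_nonneg N (S j) L' N).
      enough (fsum N shifted = fsum N (level_term N (S j) L')) by lra. reflexivity. }
  unfold level_mass at 1. rewrite fsum_shift, Hfirst.
  pose proof (Rmult_le_compat_l _ _ _ Ha1 Hcur). pose proof (Rmult_le_compat_l _ _ _ Ha2 Hprev).
  lra.
Qed.

(** After the worst link, [a1 + a2 = phi k < 1]: the recursion in [L]
    contracts and keeps the level masses uniformly bounded. *)
Lemma level_mass_step j K : (S (S j) <= l)%nat -> S (S j) <> m -> 0 <= K ->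
  (forall N L, level_mass N j L <= K) ->
  exists K', forall N L, level_mass N (S j) L <= K'.
Proof.
  intros Hk Hkm HK HN.
  set (a1 := p m * psi p th (S (S j))). set (a2 := A * exp th * psi p th (S (S j))).
  assert (Hpsi : 0 <= psi p th (S (S j))) by (apply (psi_nonneg l); auto; lia).
  assert (Ha1 : 0 <= a1) by (unfold a1; pose proof (Hp m Hm); apply Rmult_le_pos; lra).
  assert (Ha2 : 0 <= a2).
  { unfold a2, A. pose proof (Hp m Hm). pose proof (exp_pos th).
    apply Rmult_le_pos; [apply Rmult_le_pos|]; lra. }
  assert (Hsum : a1 + a2 < 1).
  { pose proof (Hphi (S (S j)) ltac:(lia) Hkm) as Hc. unfold phi in Hc.
    rewrite (proj2 (Nat.eqb_neq _ _) Hkm) in Hc. unfold a1, a2, A. fold (psi p th (S (S j))) in Hc. lra. }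
  set (r := a2 / (1 - a1)). set (Q := (1 + K) / (1 - a1)).
  assert (Hr : 0 <= r < 1).
  { unfold r. split; [apply Rmult_le_pos; [lra|apply Rlt_le, Rinv_0_lt_compat; lra]|].
    apply Rmult_lt_reg_r with (1 - a1); [lra|]. unfold Rdiv. rewrite Rmult_assoc, Rinv_l by lra. lra. }
  assert (HQ : 0 <= Q) by (unfold Q; apply Rmult_le_pos; [lra|apply Rlt_le, Rinv_0_lt_compat; lra]).
  exists (Q / (1 - r)). intros N L.
  apply (geo_bound (fun L => level_mass N (S j) L) r Q); auto.
  - pose proof (level_recursion j N 0 Hk Hkm) as R0. pose proof (HN N 0%nat). simpl Ind in R0.
    fold a1 a2 in R0. unfold Q. apply Rmult_le_reg_r with (1 - a1); [lra|].
    unfold Rdiv. rewrite Rmult_assoc, Rinv_l by lra. lra.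
  - intro L0. pose proof (level_recursion j N (S L0) Hk Hkm) as R1. pose proof (HN N (S L0)).
    simpl Ind in R1. fold a1 a2 in R1.
    apply Rmult_le_reg_l with (1 - a1); [lra|].
    unfold r, Q. replace ((1 - a1) * (a2 / (1 - a1) * level_mass N (S j) L0 + (1 + K) / (1 - a1)))
      with (a2 * level_mass N (S j) L0 + (1 + K)) by (field; lra).
    lra.
Qed.

Lemma level_mass_bounded : exists K, forall N L, level_mass N (l - 1) L <= K.
Proof.
  assert (base : exists K, forall N L, level_mass N (m - 1) L <= K).
  { destruct (Nat.eq_dec m 1) as [E|E].
    - exists (/ A + 1). intros N L. replace (m - 1)%nat with 0%nat by lia. apply level_mass_first; auto.
    - destruct (level_mass_at_worst (m - 2) ltac:(lia)) as [P HP].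
      exists ((/ A + 1) * P). intros N L. replace (m - 1)%nat with (S (m - 2)) by lia. apply HP. }
  assert (up : forall d, (m - 1 + d <= l - 1)%nat ->
               exists K, forall N L, level_mass N (m - 1 + d) L <= K).
  { induction d as [|d IH]; intro Hd; [rewrite Nat.add_0_r; exact base|].
    destruct (IH ltac:(lia)) as [K HK].
    assert (HK0 : 0 <= K) by (eapply Rle_trans; [apply (level_mass_nonneg 0 (m - 1 + d) 0)|apply HK]).
    replace (m - 1 + S d)%nat with (S (m - 1 + d)) by lia.
    apply (level_mass_step (m - 1 + d) K); auto; lia. }
  destruct (up (l - m)%nat ltac:(lia)) as [K HK]. exists K.
  replace (l - 1)%nat with (m - 1 + (l - m))%nat by lia. exact HK.
Qed.

End LevelMass.

Lemma fsum_Ind_eq M L0 : fsum M (fun L => Ind (Nat.eqb L0 L)) = Ind (Nat.ltb L0 M).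
Proof.
  induction M; [reflexivity|]. simpl fsum. rewrite IHM. unfold Ind.
  destruct (Nat.eqb_spec L0 M), (Nat.ltb_spec L0 M), (Nat.ltb_spec L0 (S M)); lra || lia.
Qed.

Lemma geometric_weights_le q a M : 0 <= q < 1 ->
  fsum M (fun L => if Nat.leb a L then q ^ (L - a) else 0) <= / (1 - q).
Proof.
  intro Hq.
  assert (G : fsum M (fun L => if Nat.leb a L then q ^ (L - a) else 0) * (1 - q) =
              if Nat.leb a M then 1 - q ^ (M - a) else 0).
  { induction M; [destruct a; simpl; ring|].
    simpl fsum. rewrite Rmult_plus_distr_r, IHM.
    destruct (Nat.leb_spec a M), (Nat.leb_spec a (S M)); try lia.
    - replace (S M - a)%nat with (S (M - a)) by lia. simpl. ring.
    - replace a with (S M) by lia. rewrite Nat.sub_diag. simpl. ring.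
    - ring. }
  apply Rmult_le_reg_r with (1 - q); [lra|]. rewrite G, Rinv_l by lra.
  destruct (Nat.leb a M); [pose proof (pow_le q (M - a) (proj1 Hq)); lra|lra].
Qed.

Lemma exp_mul_INR x n : exp (x * INR n) = exp x ^ n.
Proof.
  induction n; simpl pow; [rewrite Rmult_0_r; apply exp_0|].
  rewrite S_INR, Rmult_plus_distr_l, Rmult_1_r, exp_plus, IHn. ring.
Qed.

Lemma successes_below z k N n :
  fsum N (fun t => Ind (Nat.ltb (successes z k t) n) * Ind (z (S t) k)) =
  INR (Nat.min (successes z k N) n).
Proof.
  induction N; [reflexivity|].
  simpl fsum. rewrite IHN. simpl successes. unfold Ind.
  destruct (z (S N) k), (Nat.ltb_spec (successes z k N) n).
  - rewrite !Nat.min_l by lia. rewrite plus_INR. simpl. ring.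
  - rewrite !Nat.min_r by lia. ring.
  - rewrite Nat.add_0_r. ring.
  - rewrite Nat.add_0_r. ring.
Qed.

Section Tail.
Variable l : nat.
Variable p : nat -> R.
Variable m : nat.
Hypothesis Hl : (1 <= l)%nat.
Hypothesis Hp : forall i, (1 <= i <= l)%nat -> 0 <= p i < 1.
Hypothesis Hm : (1 <= m <= l)%nat.
Variable th : R.
Hypothesis Hth : 0 < th.
Hypothesis Hphi : forall k, (1 <= k <= l)%nat -> k <> m -> 0 <= phi p m th k < 1.

Let A := 1 - p m.

Definition tail_prob N n t : R :=
  Exp p (cells l N) (fun z => Ind (Nat.ltb (rho None z t (S l)) n)).

Lemma tail_prob_times_success N n t : (t < N)%nat ->
  A * tail_prob N n t =
  Exp p (cells l N) (fun z => Ind (Nat.ltb (rho None z t (S l)) n) * Ind (z (S t) m)).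
Proof.
  intro Ht. unfold tail_prob. rewrite (Exp_times_success l p m Hm N t); auto; [unfold A; ring|].
  intros z z' E. rewrite (rho_depends None t (S l) z z' E). reflexivity.
Qed.

Lemma Exp_exp_neg_successes N t : (t <= N)%nat ->
  Exp p (cells l N) (fun z => exp (- th * INR (successes z m t))) = (A * exp (- th) + p m) ^ t.
Proof.
  intro Ht. induction t.
  - simpl. rewrite Rmult_0_r, exp_0. apply Exp_const.
  - rewrite (Exp_ext _ _ _ (fun z => exp (- th * INR (successes z m t)) * exp (- th * Ind (z (S t) m)))).
    2:{ intro z. rewrite successes_S, <- exp_plus. f_equal. ring. }
    rewrite (Exp_indep_next p _ t).
    + rewrite IHt by lia. rewrite (Exp_one p _ (S t) m _ (fun b => exp (- th * Ind b))).
      * simpl. rewrite Rmult_1_r, Rmult_0_r, exp_0. unfold A. ring.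
      * apply in_cells; lia.
      * reflexivity.
    + intros z z' E. rewrite (successes_depends m t z z' E). reflexivity.
    + intros z z' E. rewrite E. reflexivity.
Qed.

(** Lower bound: the destination cannot be below [n] once link [m] has
    succeeded [n] times, and [E min (successes, n)] is close to [n]. *)
Lemma tail_sum_lower n N :
  A * fsum N (tail_prob N n) >= INR n - INR n * exp (th * INR n) * (A * exp (- th) + p m) ^ N.
Proof.
  assert (Hpk : probs_ok p (cells l N)) by (apply probs_ok_cells; auto).
  rewrite <- fsum_scal.
  rewrite (fsum_ext N _ _ (fun t Ht => tail_prob_times_success N n t Ht)), <- Exp_fsum.
  apply Rle_ge.
  apply Rle_trans with
    (Exp p (cells l N) (fun z => INR n - INR n * exp (th * INR n) * exp (- th * INR (successes z m N)))).
  { rewrite Exp_sub, Exp_const, <- (Exp_exp_neg_successes N N), Exp_scal by lia. lra. }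
  apply Exp_mono; auto. intro z.
  apply Rle_trans with (fsum N (fun t => Ind (Nat.ltb (successes z m t) n) * Ind (z (S t) m))).
  - rewrite successes_below, Rmult_assoc, <- exp_plus.
    pose proof (pos_INR n).
    destruct (Nat.le_gt_cases n (successes z m N)).
    + rewrite Nat.min_r by auto. pose proof (exp_pos (th * INR n + - th * INR (successes z m N))). nra.
    + rewrite Nat.min_l by lia.
      assert (INR (successes z m N) < INR n) by (apply lt_INR; auto).
      pose proof (exp_ineq1 (th * INR n + - th * INR (successes z m N)) ltac:(nra)).
      pose proof (pos_INR (successes z m N)).
      assert (HE : 1 <= exp (th * INR n + - th * INR (successes z m N))) by nra.
      pose proof (Rmult_le_compat_l (INR n) _ _ (pos_INR n) HE). lra.
  - apply fsum_le. intros t Ht. apply Rmult_le_compat_r; [apply Ind_01|].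
    pose proof (R_le_successes z t l m Hm). unfold Ind.
    destruct (Nat.ltb_spec (successes z m t) n), (Nat.ltb_spec (rho None z t (S l)) n); lra || lia.
Qed.

Lemma level_time_le N L :
  A * fsum N (fun t => Exp p (cells l N) (fun z => Ind (Nat.eqb (successes z m t) L))) <= 1.
Proof.
  pose proof (level_visits l p m Hp Hm N 0 L (fun _ => 1)) as H. rewrite Exp_const in H.
  eapply Rle_trans; [|apply H; [intros z z' _; reflexivity|intro; lra]].
  right. f_equal. apply fsum_ext. intros t _. simpl. apply Exp_ext. intro z. ring.
Qed.

(** Pathwise: if [R_t < n] while link [m] is at level [L >= c = n + l - 1],
    then [lindley m (l-1) t >= L - c], so [e^(-theta (L-c)) e^(theta lindley) >= 1]. *)
Lemma tail_pathwise N n t z : (t < N)%nat ->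
  let c := (n + (l - 1))%nat in
  Ind (Nat.ltb (rho None z t (S l)) n) <=
  fsum c (fun L => Ind (Nat.eqb (successes z m t) L))
  + fsum (S N) (fun L => (if Nat.leb c L then exp (- th) ^ (L - c) else 0)
                         * (Ind (Nat.eqb (successes z m t) L) * exp (th * lindley m (l - 1) z t))).
Proof.
  intros Ht c. set (L0 := successes z m t).
  assert (Hterm : forall L, 0 <= (if Nat.leb c L then exp (- th) ^ (L - c) else 0)
                              * (Ind (Nat.eqb L0 L) * exp (th * lindley m (l - 1) z t))).
  { intro L. pose proof (Ind_01 (Nat.eqb L0 L)). pose proof (exp_pos (th * lindley m (l - 1) z t)).
    apply Rmult_le_pos; [|nra]. destruct (Nat.leb c L); [|lra]. apply pow_le, Rlt_le, exp_pos. }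
  assert (Hhigh : 0 <= fsum (S N) (fun L => (if Nat.leb c L then exp (- th) ^ (L - c) else 0)
                         * (Ind (Nat.eqb L0 L) * exp (th * lindley m (l - 1) z t))))
    by (apply fsum_nonneg; auto).
  rewrite fsum_Ind_eq.
  destruct (Nat.ltb_spec L0 c); [pose proof (Ind_01 (Nat.ltb (rho None z t (S l)) n)); simpl Ind; lra|].
  destruct (Nat.ltb_spec (rho None z t (S l)) n) as [HR|HR]; [|simpl Ind; lra].
  eapply Rle_trans; [|apply Rplus_le_compat_l, (fsum_ge_term (S N) _ L0); auto].
  2:{ pose proof (successes_le z m t). fold L0 in H0. lia. }
  cbv beta. rewrite (proj2 (Nat.leb_le c L0)), Nat.eqb_refl by lia. simpl Ind.
  rewrite Rmult_1_l, <- exp_mul_INR, <- exp_plus.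
  pose proof (deficit_bound m z (l - 1) t) as D. replace (S (S (l - 1))) with (S l) in D by lia.
  fold L0 in D.
  assert (INR (rho None z t (S l)) + 1 <= INR n) by (rewrite <- S_INR; apply le_INR; lia).
  assert (INR (L0 - c) = INR L0 - INR n - INR (l - 1))
    by (rewrite minus_INR by lia; unfold c; rewrite plus_INR; ring).
  set (x := - th * INR (L0 - c) + th * lindley m (l - 1) z t).
  assert (0 <= x) by (unfold x; nra).
  destruct (Req_dec x 0) as [E|E]; [rewrite E, exp_0; lra|].
  pose proof (exp_ineq1 x ltac:(lra)). lra.
Qed.

(** Levels below [c = n + l - 1] are each occupied for mean time [<= 1/A];
    higher levels contribute a geometric series of bounded level masses. *)
Lemma tail_sum_upper : exists C, 0 <= C /\ forall n N, fsum N (tail_prob N n) <= INR n / A + C.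
Proof.
  destruct (level_mass_bounded l p m Hp Hm th Hphi) as [K HK].
  assert (HK0 : 0 <= K)
    by (eapply Rle_trans; [apply (level_mass_nonneg l p m Hp th 0 (l - 1) 0)|apply HK]).
  pose proof (A_pos l p m Hp Hm) as HA. fold A in HA.
  set (q := exp (- th)).
  assert (Hq : 0 <= q < 1).
  { unfold q. split; [apply Rlt_le, exp_pos|]. rewrite <- exp_0. apply exp_increasing. lra. }
  assert (Hiq : 0 < / (1 - q)) by (apply Rinv_0_lt_compat; lra).
  assert (HiA : 0 < / A) by (apply Rinv_0_lt_compat; lra).
  exists (INR (l - 1) / A + K * / (1 - q)). split.
  { pose proof (pos_INR (l - 1)). unfold Rdiv. apply Rplus_le_le_0_compat; apply Rmult_le_pos; lra. }
  intros n N. set (c := (n + (l - 1))%nat).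
  set (coef := fun L => if Nat.leb c L then q ^ (L - c) else 0).
  assert (Hcoef : forall L, 0 <= coef L).
  { intro L. unfold coef. destruct (Nat.leb c L); [apply pow_le; lra|lra]. }
  set (E1 := fun t L => Exp p (cells l N) (fun z => Ind (Nat.eqb (successes z m t) L))).
  set (E2 := fun t L => level_term l p m th N (l - 1) L t).
  apply Rle_trans with (fsum N (fun t => fsum c (E1 t) + fsum (S N) (fun L => coef L * E2 t L))).
  { apply fsum_le. intros t Ht. unfold tail_prob.
    eapply Rle_trans; [apply Exp_mono; [apply probs_ok_cells; auto|]; intro z; apply (tail_pathwise N n t z Ht)|].
    rewrite Exp_add, !Exp_fsum. apply Req_le. f_equal. apply fsum_ext. intros L _. apply Exp_scal. }
  rewrite fsum_add, (fsum_swap N c), (fsum_swap N (S N)).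
  replace (INR n / A + (INR (l - 1) / A + K * / (1 - q)))
    with ((INR n / A + INR (l - 1) / A) + K * / (1 - q)) by ring.
  apply Rplus_le_compat.
  -
    apply Rle_trans with (fsum c (fun _ => / A)).
    + apply fsum_le. intros L _. apply Rmult_le_reg_l with A; auto. rewrite Rinv_r by lra.
      apply level_time_le.
    + rewrite fsum_const. unfold c. rewrite plus_INR. unfold Rdiv. right. ring.
  -
    rewrite (fsum_ext (S N) _ (fun L => coef L * fsum N (fun t => E2 t L))) by (intros; apply fsum_scal).
    apply Rle_trans with (fsum (S N) (fun L => coef L * K)).
    + apply fsum_le. intros L _. apply Rmult_le_compat_l; auto.
      eapply Rle_trans; [|apply (HK N L)]. unfold level_mass. simpl fsum at 2.
      pose proof (level_term_nonneg l p m Hp th N (l - 1) L N). unfold E2.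
      change (fun t => level_term l p m th N (l - 1) L t) with (level_term l p m th N (l - 1) L). lra.
    + rewrite fsum_scal_r, Rmult_comm. apply Rmult_le_compat_l; auto. apply geometric_weights_le; auto.
Qed.

End Tail.

(** * The finite source: law of the completion time [T_n] *)

Section FiniteSource.
Variable l : nat.
Variable p : nat -> R.
Hypothesis Hl : (1 <= l)%nat.
Hypothesis Hp : forall i, (1 <= i <= l)%nat -> 0 <= p i < 1.
Variable n : nat.

(** [surv t = P (T_n > t) = P (R_t < n)] for the source holding [n] packets. *)
Definition surv (t : nat) : R := Exp p (cells l t) (fun z => Ind (Nat.ltb (Rt l (Some n) z t) n)).

Lemma Rt_finite_le z t : (Rt l (Some n) z t <= n)%nat.
Proof. unfold Rt. rewrite rho_finite_source by lia. lia. Qed.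

Lemma surv_tail_prob N t : (t <= N)%nat -> surv t = tail_prob l p N n t.
Proof.
  intro H. unfold surv, tail_prob.
  rewrite (Exp_cells_extend p l t N (fun z => Ind (Nat.ltb (rho None z t (S l)) n)) H).
  2:{ intros z z' E. rewrite (rho_depends None t (S l) z z' E). reflexivity. }
  apply Exp_ext. intro z. unfold Rt. rewrite rho_finite_source by lia. f_equal.
  destruct (Nat.ltb_spec (Nat.min (rho None z t (S l)) n) n), (Nat.ltb_spec (rho None z t (S l)) n);
    reflexivity || lia.
Qed.

Lemma PT_0 : PT l p n 0 = 1 - surv 0.
Proof. unfold PT, surv. simpl. unfold Rt. simpl rho. destruct n; simpl; ring. Qed.

(** [P (T_n = t+1) = P (T_n > t) - P (T_n > t+1)], since [R] is monotone
    and never exceeds [n]. *)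
Lemma PT_S t : PT l p n (S t) = surv t - surv (S t).
Proof.
  unfold PT, surv.
  rewrite <- (Exp_cells_extend p l t (S t) (fun z => Ind (Nat.ltb (Rt l (Some n) z t) n))) by
    (try lia; intros z z' E; unfold Rt; rewrite (rho_depends (Some n) t (S l) z z' E); reflexivity).
  rewrite <- Exp_sub. apply Exp_ext. intro z.
  set (R := Rt l (Some n) z).
  assert (Hmono : forall s s', (s <= s')%nat -> (R s <= R s')%nat)
    by (intros; apply rho_mono; auto).
  pose proof (Rt_finite_le z t). pose proof (Rt_finite_le z (S t)). pose proof (Hmono t (S t) ltac:(lia)).
  fold R in H, H0.
  assert (Hall : forallb (fun s => negb (Nat.eqb (R s) n)) (seq 0 (S t)) = negb (Nat.eqb (R t) n)).
  { destruct (Nat.eqb_spec (R t) n) as [E|E]; simpl negb.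
    - apply Bool.not_true_is_false. intro F. rewrite forallb_forall in F.
      specialize (F t ltac:(apply in_seq; lia)). rewrite E, Nat.eqb_refl in F. discriminate.
    - apply forallb_forall. intros s Hs. apply in_seq in Hs.
      pose proof (Hmono s t ltac:(lia)). apply Bool.negb_true_iff, Nat.eqb_neq. lia. }
  rewrite Hall. unfold Ind.
  destruct (Nat.eqb_spec (R (S t)) n), (Nat.eqb_spec (R t) n),
    (Nat.ltb_spec (R t) n), (Nat.ltb_spec (R (S t)) n); simpl; lra || lia.
Qed.

Lemma surv_nonneg t : 0 <= surv t.
Proof. apply Exp_nonneg; [apply probs_ok_cells; auto|]. intro z. apply Ind_01. Qed.

Lemma PT_nonneg t : 0 <= PT l p n t.
Proof.
  unfold PT. apply Exp_nonneg; [apply probs_ok_cells; auto|]. intro z. destruct (_ && _); lra.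
Qed.

Lemma surv_decr t : surv (S t) <= surv t.
Proof. pose proof (PT_nonneg (S t)). rewrite PT_S in H. lra. Qed.

Lemma partial_sum_PT N : sum_f_R0 (PT l p n) N = 1 - surv N.
Proof. induction N; simpl; [apply PT_0|]. rewrite IHN, PT_S. ring. Qed.

Lemma partial_sum_tPT N :
  sum_f_R0 (fun t => INR t * PT l p n t) N = fsum N surv - INR N * surv N.
Proof.
  induction N; [simpl; ring|].
  rewrite tech5, IHN, PT_S, S_INR. simpl fsum. ring.
Qed.

End FiniteSource.

Lemma Un_cv_const c : Un_cv (fun _ => c) c.
Proof. intros eps Heps. exists 0%nat. intros. unfold Rdist. rewrite Rminus_diag, Rabs_R0. lra. Qed.

Lemma Un_cv_pow_0 x : 0 <= x < 1 -> Un_cv (fun N => x ^ N) 0.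
Proof.
  intros Hx eps Heps. destruct (pow_lt_1_zero x ltac:(rewrite Rabs_right; lra) eps Heps) as [N HN].
  exists N. intros k Hk. unfold Rdist. rewrite Rminus_0_r. auto.
Qed.

Lemma weighted_tail_vanishes (q : nat -> R) Sq :
  (forall N, 0 <= q N) -> (forall N, q (S N) <= q N) -> Un_cv (fun N => fsum N q) Sq ->
  Un_cv (fun N => INR N * q N) 0.
Proof.
  intros Hq Hdecr Hcv eps Heps.
  assert (Hmono : forall s t, (s <= t)%nat -> q t <= q s)
    by (induction 1; [lra|pose proof (Hdecr m); lra]).
  assert (Hblock : forall M N, (M <= N)%nat -> INR (N - M) * q N <= fsum N q - fsum M q).
  { induction 1; [rewrite Nat.sub_diag; simpl; lra|].
    replace (S m - M)%nat with (S (m - M)) by lia. rewrite S_INR. simpl fsum.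
    pose proof (Hdecr m). pose proof (Hq (S m)). pose proof (Hmono M m ltac:(auto)).
    assert (INR (m - M) * q (S m) <= INR (m - M) * q m) by (apply Rmult_le_compat_l; [apply pos_INR|lra]).
    lra. }
  destruct (Hcv (eps / 4) ltac:(lra)) as [M0 HM0].
  exists (2 * M0 + 1)%nat. intros N HN. unfold Rdist. rewrite Rminus_0_r.
  pose proof (Hblock M0 N ltac:(lia)) as D.
  pose proof (HM0 N ltac:(lia)) as E1. pose proof (HM0 M0 (le_n _)) as E2.
  unfold Rdist in E1, E2. apply Rabs_def2 in E1. apply Rabs_def2 in E2.
  assert (INR N <= 2 * INR (N - M0)).
  { rewrite minus_INR by lia. assert (INR (2 * M0 + 1) <= INR N) by (apply le_INR; lia).
    rewrite plus_INR, mult_INR in H. simpl in H. lra. }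
  pose proof (Hq N). pose proof (pos_INR N).
  assert (INR N * q N <= 2 * INR (N - M0) * q N) by nra.
  rewrite Rabs_right by nra. lra.
Qed.

Lemma tail_vanishes (q : nat -> R) :
  (forall N, 0 <= q N) -> Un_cv (fun N => INR N * q N) 0 -> Un_cv q 0.
Proof.
  intros Hq Hcv eps Heps. destruct (Hcv eps Heps) as [N0 HN0].
  exists (S N0). intros N HN. specialize (HN0 N ltac:(lia)). unfold Rdist in *.
  rewrite Rminus_0_r in *. pose proof (Hq N).
  assert (1 <= INR N) by (apply (le_INR 1); lia).
  rewrite Rabs_right in * by nra. nra.
Qed.

Lemma completion_time_law l p n Sinf : (1 <= l)%nat ->
  (forall i, (1 <= i <= l)%nat -> 0 <= p i < 1) ->
  Un_cv (fun N => fsum N (surv l p n)) Sinf ->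
  infinite_sum (PT l p n) 1 /\ infinite_sum (fun t => INR t * PT l p n t) Sinf.
Proof.
  intros Hl Hp Hcv.
  pose proof (weighted_tail_vanishes _ Sinf (surv_nonneg l p Hp n) (surv_decr l p Hl Hp n) Hcv) as Hw.
  pose proof (tail_vanishes _ (surv_nonneg l p Hp n) Hw) as H0.
  split.
  - pose proof (CV_minus _ _ _ _ (Un_cv_const 1) H0) as Hlim. rewrite Rminus_0_r in Hlim.
    apply (Un_cv_ext _ _ (fun N => eq_sym (partial_sum_PT l p Hl n N)) 1 Hlim).
  - pose proof (CV_minus _ _ _ _ Hcv Hw) as Hlim. rewrite Rminus_0_r in Hlim.
    apply (Un_cv_ext _ _ (fun N => eq_sym (partial_sum_tPT l p Hl n N)) Sinf Hlim).
Qed.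

(** Letting [N -> oo] in [tail_sum_lower] (with [theta = 1]): [E T_n >= n / A]. *)
Lemma mean_completion_lower l p m n Sinf : (1 <= l)%nat ->
  (forall i, (1 <= i <= l)%nat -> 0 <= p i < 1) -> (1 <= m <= l)%nat ->
  Un_cv (fun N => fsum N (surv l p n)) Sinf -> INR n / (1 - p m) <= Sinf.
Proof.
  intros Hl Hp Hm HS. set (A := 1 - p m).
  pose proof (A_pos l p m Hp Hm) as HA. fold A in HA.
  set (beta := A * exp (- 1) + p m).
  assert (Hbeta : 0 <= beta < 1).
  { assert (exp (- 1) < 1) by (rewrite <- exp_0; apply exp_increasing; lra).
    pose proof (exp_pos (- 1)). pose proof (Hp m Hm). unfold beta, A in *. nra. }
  assert (Hlow : INR n <= A * Sinf).
  { apply (Rle_cv_lim (Un := fun N => INR n - INR n * exp (1 * INR n) * beta ^ N)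
                      (Vn := fun N => A * fsum N (surv l p n))).
    - intro N. rewrite (fsum_ext N _ (tail_prob l p N n)) by (intros; apply (surv_tail_prob l p Hl); lia).
      apply Rge_le, (tail_sum_lower l p m Hl Hp Hm 1 Rlt_0_1).
    - pose proof (CV_minus _ _ _ _ (Un_cv_const (INR n))
        (CV_mult _ _ _ _ (Un_cv_const (INR n * exp (1 * INR n))) (Un_cv_pow_0 beta Hbeta))) as Hlim.
      rewrite Rmult_0_r, Rminus_0_r in Hlim. exact Hlim.
    - apply (CV_mult (fun _ => A)); [apply Un_cv_const|exact HS]. }
  apply Rmult_le_reg_l with A; auto. unfold Rdiv.
  rewrite <- Rmult_assoc, (Rmult_comm A), Rmult_assoc, Rinv_r by lra. lra.
Qed.

Theorem expected_completion_time (l : nat) (p : nat -> R) (m : nat) :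
  (1 <= l)%nat ->
  (forall i, (1 <= i <= l)%nat -> 0 <= p i < 1) ->
  (1 <= m <= l)%nat ->
  (forall i, (1 <= i <= l)%nat -> i <> m -> p i < p m) ->
  exists C : R, forall n : nat,
    infinite_sum (PT l p n) 1 /\
    exists ET : R,
      infinite_sum (fun t => INR t * PT l p n t) ET /\ Rabs (ET - INR n / (1 - p m)) <= C.
Proof.
  intros Hl Hp Hm Hlt.
  destruct (contracting_theta_exists l p m Hp Hm Hlt) as [th [Hth Hphi]].
  destruct (tail_sum_upper l p m Hl Hp Hm th Hth Hphi) as [C [HC Hup]].
  exists C. intro n. set (A := 1 - p m).
  set (s := fun N => fsum N (surv l p n)).
  assert (Hs : forall N, s N = fsum N (tail_prob l p N n)).
  { intro N. apply fsum_ext. intros t Ht. apply (surv_tail_prob l p Hl); lia. }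
  assert (Hgrow : Un_growing s).
  { intro N. unfold s. simpl fsum. pose proof (surv_nonneg l p Hp n N). lra. }
  assert (Hbound : forall N, s N <= INR n / A + C) by (intro N; rewrite Hs; apply Hup).
  destruct (growing_cv s Hgrow ltac:(exists (INR n / A + C); intros x [N ->]; apply Hbound))
    as [Sinf HS].
  destruct (completion_time_law l p n Sinf Hl Hp HS) as [Hlaw Hmean].
  split; [exact Hlaw|]. exists Sinf. split; [exact Hmean|].
  pose proof (mean_completion_lower l p m n Sinf Hl Hp Hm HS) as Hlow. fold A in Hlow.
  assert (HSup : Sinf <= INR n / A + C).
  { apply (Rle_cv_lim (Un := s) (Vn := fun _ => INR n / A + C)); auto. apply Un_cv_const. }
  rewrite Rabs_right; lra.
Qed.

Theorem mainTheorem8 (l : nat) (p : nat -> R) (m : nat) :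
  (1 <= l)%nat ->
  (forall i, (1 <= i <= l)%nat -> 0 <= p i < 1) ->
  (1 <= m <= l)%nat ->
  (forall i, (1 <= i <= l)%nat -> i <> m -> p i < p m) ->
  let A := 1 - p m in
  (* E R_t = A t - r(t) with r bounded uniformly (unlimited source regime) *)
  (exists C : R, forall t : nat, Rabs (A * INR t - ER_inf l p t) <= C) /\
  (* E T_n = n / A + O(1) as n -> infinity *)
  (exists (C : R) (N : nat), forall n : nat, (N <= n)%nat ->
     infinite_sum (fun t => PT l p n t) 1 /\
     exists ET : R,
       infinite_sum (fun t => INR t * PT l p n t) ET /\
       Rabs (ET - INR n / A) <= C).
Proof.
  intros Hl Hp Hm Hlt A. split.
  - exact (expected_rank_linear l p m Hl Hp Hm Hlt).
  - destruct (expected_completion_time l p m Hl Hp Hm Hlt) as [C HC].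
    exists C, 0%nat. intros n _. exact (HC n).
Qed.
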